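(* For every integer $n\geq 0$, $$M_n=\sum_{k=0}^{n}(-1)^{n-k}\binom{n}{k}C_{k+1}=\sum_{k=0}^{n}(-1)^{k}3^{n-k}\binom{n}{k}C_{k+1}=\frac{1}{(\sqrt2)^{n+2}}\sum_{k=0}^{n}(\sqrt2-3)^{n-k}\binom{n}{k}S_{k+1}=\frac{1}{(\sqrt2)^{n+2}}\sum_{k=0}^{n}(-1)^k(3+\sqrt2)^{n-k}\binom{n}{k}S_{k+1},$$ where $C_m$, $M_m$, $S_m$ are the Catalan, Motzkin and (large) Schröder numbers.
   Context: $C_m=\frac{1}{m+1}\binom{2m}{m}$ is the Catalan number; $M_m=\sum_{k=0}^{\lfloor m/2\rfloor}\binom{m}{2k}C_k$ is the Motzkin number; $S_m$ is the number of Schröder paths from $(0,0)$ to $(m,m)$ with steps $(0,1),(1,0),(1,1)$ never going below the line $y=x$, i.e. $S_m=\sum_{k=0}^{m}\binom{m+k}{2k}C_k$ (so $S_0=1,S_1=2,S_2=6,S_3=22,\dots$). *)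

From HB Require Import structures.
From mathcomp Require Import all_boot all_order all_algebra.
Set Implicit Arguments. Unset Strict Implicit. Unset Printing Implicit Defensive.
Import Order.TTheory GRing.Theory Num.Theory.

Definition catalan (m : nat) : nat := 'C(m.*2, m) %/ m.+1.

Definition motzkin (m : nat) : nat :=
  \sum_(k < m./2.+1) 'C(m, k.*2) * catalan k.

Definition schroeder (m : nat) : nat :=
  \sum_(k < m.+1) 'C(m + k, k.*2) * catalan k.

From HB Require Import structures.
From mathcomp Require Import all_boot all_order all_algebra.
From mathcomp Require Import ring zify.
Set Implicit Arguments.
Unset Strict Implicit.
Unset Printing Implicit Defensive.
Import Order.TTheory GRing.Theory Num.Theory.
Local Open Scope ring_scope.

(* Write T_e u n = sum_k C(n,k) e^(n-k) u_k (the e-shifted binomial transform), so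
   that T_d (T_b u) = T_(b+d) u, and T_(-b) u n = (-1)^n T_b u n when u vanishes
   at odd indices.  Let c be the aerated Catalan sequence c_(2j) = C_j,
   c_(2j+1) = 0.  Then M_n = T_1 c n by definition, C_(n+1) = T_2 c n
   (Touchard) and S_(n+1) = 2 T_3 (2^(i/2) c_i) n = 2 (sqrt 2)^n T_(3/sqrt 2) c n,
   so each of the four sums collapses to T_1 c n.
   Both expansions come from the trinomial expansion of (b X + a + X^2)^n: the
   difference [X^n] - a [X^(n+2)] of its n-th power is T_b (a^(i/2) c_i) n.  For
   Touchard take (X + 1)^(2n); for Schroeder write S_(n+1) through coefficients of
   powers of Q = (X + 1)(X + 2) and use the symmetry 2^k [X^(n+k)] Q^n =
   [X^(n-k)] Q^n. *)

Lemma bin_double_succ_le j : ('C(j.*2, j.+1) <= 'C(j.*2, j))%N.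
Proof. by have := mul_bin_left j.*2 j; rewrite -addnn addnK; nia. Qed.

Lemma catalan_bin j : catalan j = ('C(j.*2, j) - 'C(j.*2, j.+1))%N.
Proof.
have := mul_bin_left j.*2 j; rewrite -addnn addnK => bin_left.
rewrite /catalan -addnn; set B := 'C(_, j); set B' := 'C(_, j.+1).
by rewrite (_ : B = j.+1 * (B - B'))%N ?mulKn //; nia.
Qed.

Lemma mul_bin_trinomial a b c : (c <= b <= a)%N ->
  ('C(a, b) * 'C(b, c) = 'C(a, c) * 'C(a - c, b - c))%N.
Proof.
case/andP=> le_cb le_ba.
have facts_gt0 : (0 < c`! * (b - c)`! * (a - b)`!)%N by rewrite !muln_gt0 !fact_gt0.
apply/eqP; rewrite -(eqn_pmul2r facts_gt0); apply/eqP.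
have := bin_fact (_ : b - c <= a - c)%N.
rewrite (_ : a - c - (b - c) = a - b)%N => [bin_ac|]; last by lia.
transitivity ('C(a, b) * ('C(b, c) * (c`! * (b - c)`!)) * (a - b)`!)%N; first by ring.
rewrite bin_fact // -mulnA bin_fact //.
transitivity ('C(a, c) * (c`! * ('C(a - c, b - c) * ((b - c)`! * (a - b)`!))))%N;
  last by ring.
by rewrite bin_ac ?bin_fact //; lia.
Qed.

Lemma mul_bin_double_half m k :
  ('C(m + k, k.*2) * 'C(k.*2, k) = 'C(m, k) * 'C(m + k, m))%N.
Proof.
have [le_km|lt_mk] := leqP k m; last first.
  by rewrite (bin_small lt_mk) bin_small //; lia.
rewrite mul_bin_trinomial; last by apply/andP; lia.
by rewrite -addnn !addnK mulnC -(bin_sub (leq_addr k m)) addKn.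
Qed.

Lemma mul_bin_double_halfS m k :
  ('C(m.+1 + k.+1, k.+1.*2) * 'C(k.+1.*2, k.+2) = 'C(m, k) * 'C(m + 2 + k, m))%N.
Proof.
have [le_km|lt_mk] := leqP k m; last first.
  by rewrite (bin_small lt_mk) bin_small //; lia.
rewrite mul_bin_trinomial; last by apply/andP; lia.
rewrite mulnC -(bin_sub (_ : k.+2 <= m.+1 + k.+1)%N); last by lia.
by congr (_ * _)%N; congr 'C(_, _); lia.
Qed.

Lemma natr_catalan (R : pzRingType) j :
  (catalan j)%:R = 'C(j.*2, j)%:R - 'C(j.*2, j.+1)%:R :> R.
Proof. by rewrite catalan_bin natrB ?bin_double_succ_le. Qed.

Lemma natr_catalanS (R : comPzRingType) n :
  (catalan n.+1)%:R = 'C(n.*2, n)%:R - 'C(n.*2, n.+2)%:R :> R.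
Proof.
have bin_mid : 'C(n.*2.+1, n) = 'C(n.*2.+1, n.+1).
  by rewrite -(bin_sub (_ : n.+1 <= n.*2.+1)%N) -addnn; [congr 'C(_, _); lia | lia].
rewrite natr_catalan doubleS !binS bin_mid binS !natrD; ring.
Qed.

Lemma sum_even_support (V : nmodType) (h : nat -> V) N :
  (forall i, odd i -> h i = 0) ->
  \sum_(i < N.+1) h i = \sum_(j < N./2.+1) h j.*2.
Proof.
move=> h_odd; elim: N => [|N IHN]; first by rewrite !big_ord1.
rewrite big_ord_recr /= IHN uphalf_half.
have [odd_N|even_N] := boolP (odd N).
  rewrite add1n [in RHS]big_ord_recr /=; congr (_ + h _).
  by rewrite -[in LHS](odd_double_half N) odd_N.
by rewrite h_odd ?addr0 ?add0n.
Qed.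

Section BinomialTransform.
Variable R : comPzRingType.

Definition binomial_transform (e : R) (u : nat -> R) (n : nat) : R :=
  \sum_(k < n.+1) 'C(n, k)%:R * e ^+ (n - k) * u k.

Lemma eq_binomial_transform e u v n :
  (forall k, (k <= n)%N -> u k = v k) ->
  binomial_transform e u n = binomial_transform e v n.
Proof. by move=> euv; apply: eq_bigr => -[k /= /euv ->]. Qed.

Lemma binomial_transform0 e u : binomial_transform e u 0 = u 0%N.
Proof. by rewrite /binomial_transform big_ord1 bin0 expr0 !mul1r. Qed.

Lemma binomial_transformS e u n :
  binomial_transform e u n.+1 =
  e * binomial_transform e u n + binomial_transform e (fun k => u k.+1) n.
Proof.
rewrite /binomial_transform big_ord_recl /= subn0.
under eq_bigr => i _ do rewrite /bump /= add1n binS natrD !mulrDl subSS.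
rewrite big_split /= addrA; congr (_ + _).
rewrite mulr_sumr [in RHS]big_ord_recl (big_ord_recr n) /=.
rewrite (bin_small (ltnSn n)) mul0r mul0r addr0 !bin0 subn0 exprS.
congr (_ + _); first by ring.
apply: eq_bigr => i _; rewrite /bump /= add1n -(subnSK (ltn_ord i)) exprS; ring.
Qed.

Lemma binomial_transform_linear e a u v n :
  binomial_transform e (fun k => a * u k + v k) n =
  a * binomial_transform e u n + binomial_transform e v n.
Proof.
by rewrite /binomial_transform mulr_sumr -big_split /=; apply: eq_bigr => k _; ring.
Qed.

Lemma binomial_transform_comp d b u n :
  binomial_transform d (binomial_transform b u) n = binomial_transform (b + d) u n.
Proof.
elim: n u => [|n IHn] u; first by rewrite !binomial_transform0.
rewrite !binomial_transformS IHn (@eq_binomial_transform d _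
  (fun k => b * binomial_transform b u k + binomial_transform b (fun j => u j.+1) k));
  last by move=> k _; apply: binomial_transformS.
by rewrite binomial_transform_linear !IHn; ring.
Qed.

Lemma binomial_transformN b u n : (forall i, odd i -> u i = 0) ->
  binomial_transform (- b) u n = (-1) ^+ n * binomial_transform b u n.
Proof.
move=> u_odd; rewrite /binomial_transform mulr_sumr; apply: eq_bigr => -[i /= le_in] _.
have [/u_odd->|even_i] := boolP (odd i); first by rewrite !mulr0.
have -> : (-1) ^+ n = (-1) ^+ (n - i) * (-1) ^+ i :> R by rewrite -exprD subnK.
by rewrite -[(-1) ^+ i]signr_odd (negPf even_i) expr0 [(- b) ^+ _]exprNn; ring.
Qed.

Lemma binomial_transform_scale s b u n :
  binomial_transform (s * b) (fun i => s ^+ i * u i) n =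
  s ^+ n * binomial_transform b u n.
Proof.
rewrite /binomial_transform mulr_sumr; apply: eq_bigr => -[i /= le_in] _.
have -> : s ^+ n = s ^+ (n - i) * s ^+ i by rewrite -exprD subnK.
by rewrite exprMn; ring.
Qed.

End BinomialTransform.

Lemma binomial_transform_comp_scale (F : fieldType) (s d b : F) u n : s != 0 ->
  binomial_transform d (fun k => s ^+ k * binomial_transform b u k) n =
  s ^+ n * binomial_transform (b + d / s) u n.
Proof.
move=> s_neq0; rewrite -binomial_transform_comp -binomial_transform_scale.
by rewrite mulrC divfK.
Qed.

Section PolynomialCoefficients.
Variable R : comNzRingType.

Lemma coef_Xadd1_exp N e : (('X + 1 : {poly R}) ^+ N)`_e = 'C(N, e)%:R.
Proof.
rewrite exprD1n; under eq_bigr => i _ do rewrite -scaler_nat.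
rewrite coef_sumMXn; under eq_bigl => i do rewrite andTb.
rewrite (big_ord1_eq _ (fun i => 'C(N, i)%:R) e N.+1).
by case: ltnP => // /bin_small->.
Qed.

Lemma coef_CaddXsqr_exp (a : R) i d :
  ((a%:P + 'X^2) ^+ i)`_d =
  if odd d then 0 else 'C(i, d./2)%:R * a ^+ (i - d./2).
Proof.
rewrite exprDn; under eq_bigr => j _ do
  rewrite -polyC_exp mul_polyC -exprM mul2n -scaler_nat scalerA.
rewrite coef_sumMXn; under eq_bigl => j do rewrite andTb.
case: ifP => [odd_d|even_d].
  by rewrite big_pred0 // => j; apply: contraTF odd_d => /eqP <-; rewrite odd_double.
rewrite -[d](odd_double_half d) even_d add0n.
under eq_bigl => j do rewrite (inj_eq double_inj).
rewrite (big_ord1_eq _ (fun j => 'C(i, j)%:R * a ^+ (i - j)) d./2 i.+1) doubleK.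
by case: ltnP => // /bin_small->; rewrite mul0r.
Qed.

Lemma coef_CaddXsqr_exp_sym (a : R) i k :
  a ^+ k * ((a%:P + 'X^2) ^+ i)`_(i + k) = ((a%:P + 'X^2) ^+ i * 'X^k)`_i.
Proof.
rewrite coefMXn !coef_CaddXsqr_exp.
have := odd_double_half (i + k); have [odd_ik|even_ik] := boolP (odd (i + k)).
  by rewrite mulr0; case: ltnP => // le_ki; rewrite oddB // -oddD odd_ik.
rewrite add0n => half_ik; case: ltnP => [lt_ik|le_ki].
  by rewrite bin_small ?mul0r ?mulr0 //; lia.
have := odd_double_half (i - k).
rewrite oddB // -oddD (negbTE even_ik) add0n => half_i_k.
rewrite -(bin_sub (_ : (i + k)./2 <= i)%N); last by lia.
rewrite (_ : i - (i + k)./2 = (i - k)./2)%N; last by lia.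
rewrite (_ : i - (i - k)./2 = k + (i - k)./2)%N; last by lia.
by rewrite exprD; ring.
Qed.

Lemma coef_scaleX_add_expMXn (b : R) (q : {poly R}) n k d :
  ((b *: 'X + q) ^+ n * 'X^k)`_(n + d) =
  \sum_(i < n.+1) 'C(n, i)%:R * b ^+ (n - i) * (q ^+ i * 'X^k)`_(i + d).
Proof.
rewrite exprDn mulr_suml coef_sum; apply: eq_bigr => -[i /= le_in] _.
rewrite [in LHS]mulrnAl coefMn exprZn -!scalerAl coefZ -!mulrA coefXnM mulr_natl.
have -> : (n + d < n - i)%N = false by apply/negbTE; rewrite -leqNgt leq_subLR; lia.
by rewrite (_ : n + d - (n - i) = i + d)%N //; lia.
Qed.

Lemma coef_scaleX_add_exp_sym (a b : R) n k :
  a ^+ k * ((b *: 'X + (a%:P + 'X^2)) ^+ n)`_(n + k) =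
  ((b *: 'X + (a%:P + 'X^2)) ^+ n * 'X^k)`_n.
Proof.
have := coef_scaleX_add_expMXn b (a%:P + 'X^2) n 0 k.
rewrite expr0 mulr1 => ->.
have := coef_scaleX_add_expMXn b (a%:P + 'X^2) n k 0; rewrite addn0 => ->.
rewrite mulr_sumr; apply: eq_bigr => i _.
by rewrite addn0 -coef_CaddXsqr_exp_sym mulr1; ring.
Qed.

End PolynomialCoefficients.

Section AeratedCatalan.
Variable R : comNzRingType.

Definition aerated_catalan (x : R) (i : nat) : R :=
  if odd i then 0 else x ^+ i./2 * (catalan i./2)%:R.

Lemma aerated_catalan_odd x i : odd i -> aerated_catalan x i = 0.
Proof. by rewrite /aerated_catalan => ->. Qed.

Lemma aerated_catalan_sqr x i :
  aerated_catalan (x ^+ 2) i = x ^+ i * aerated_catalan 1 i.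
Proof.
rewrite /aerated_catalan; case: ifP => [_|even_i]; first by rewrite mulr0.
rewrite -exprM expr1n mul1r; congr (x ^+ _ * _).
by rewrite mul2n -[RHS]odd_double_half even_i.
Qed.

Lemma coef_CaddXsqr_exp_catalan (a : R) i :
  ((a%:P + 'X^2) ^+ i)`_i - a * ((a%:P + 'X^2) ^+ i)`_i.+2 = aerated_catalan a i.
Proof.
rewrite !coef_CaddXsqr_exp /aerated_catalan /= negbK.
case: ifP => [_|even_i]; first by rewrite mulr0 subrr.
have := odd_double_half i; rewrite even_i add0n natr_catalan.
case: i./2 => [|h] <-.
  by rewrite (@bin_small 0 1) // !(mul0r, mulr0, subr0, mul1r).
have -> : (h.+1.*2 - h.+1 = h.+1)%N by lia.
have -> : (h.+1.*2 - h.+2 = h)%N by lia.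
by rewrite exprS; ring.
Qed.

Lemma coef_scaleX_add_exp_catalan (a b : R) n :
  ((b *: 'X + (a%:P + 'X^2)) ^+ n)`_n
    - a * ((b *: 'X + (a%:P + 'X^2)) ^+ n)`_n.+2 =
  binomial_transform b (aerated_catalan a) n.
Proof.
have coef_exp d := coef_scaleX_add_expMXn b (a%:P + 'X^2) n 0 d.
rewrite !expr0 !mulr1 in coef_exp.
rewrite -[n in _`_n]addn0 -[n.+2]addn2 !coef_exp mulr_sumr -sumrB.
by apply: eq_bigr => i _; rewrite !mulr1 addn0 addn2 -coef_CaddXsqr_exp_catalan; ring.
Qed.

Lemma natr_motzkin_binomial_transform n :
  (motzkin n)%:R = binomial_transform 1 (aerated_catalan 1) n :> R.
Proof.
rewrite /binomial_transform
  (@sum_even_support _ (fun i => 'C(n, i)%:R * 1 ^+ (n - i) * aerated_catalan 1 i));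
  last by move=> i odd_i; rewrite aerated_catalan_odd ?mulr0.
rewrite /motzkin natr_sum; apply: eq_bigr => j _.
by rewrite /aerated_catalan odd_double doubleK !expr1n mulr1 mul1r natrM.
Qed.

Lemma natr_catalanS_binomial_transform n :
  (catalan n.+1)%:R = binomial_transform 2 (aerated_catalan 1) n :> R.
Proof.
rewrite -coef_scaleX_add_exp_catalan mul1r.
have -> : 2 *: 'X + (1%:P + 'X^2) = ('X + 1) ^+ 2 :> {poly R}.
  by rewrite -mul_polyC; ring.
by rewrite natr_catalanS -exprM mul2n !coef_Xadd1_exp.
Qed.

(* (X + 1)(X + 2): the m-th coefficient of its m-th power is the central Delannoy
   number. *)
Local Notation delannoy_poly := (3 *: 'X + (2%:P + 'X^2) : {poly R}).

Lemma sum_bin_delannoy m j :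
  \sum_(k < m.+1) 'C(m, k)%:R * 'C(m + j + k, m)%:R =
  (('X + 1) ^+ j * delannoy_poly ^+ m)`_m.
Proof.
have -> : delannoy_poly = ('X + 1) * ('X + 1 + 1) by rewrite -mul_polyC; ring.
rewrite exprMn [(_ + 1 + 1) ^+ m]exprD1n mulrA mulr_sumr coef_sum.
apply: eq_bigr => k _; rewrite [in RHS]mulrnAr coefMn -!exprD coef_Xadd1_exp.
by rewrite -[RHS]mulr_natl (addnC j m).
Qed.

Lemma natr_schroederS_delannoy n :
  (schroeder n.+1)%:R =
  (delannoy_poly ^+ n.+1)`_n.+1 - (('X + 1) ^+ 2 * delannoy_poly ^+ n)`_n.
Proof.
have := sum_bin_delannoy n.+1 0; rewrite expr0 mul1r => <-.
rewrite /schroeder natr_sum -sum_bin_delannoy.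
under eq_bigr => k _ do
  rewrite natrM natr_catalan mulrBr -!natrM mul_bin_double_half.
rewrite sumrB; congr (_ - _); first by apply: eq_bigr => k _; rewrite natrM addn0.
rewrite big_ord_recl (@bin_small 0 1) // muln0 add0r.
by apply: eq_bigr => k _; rewrite mul_bin_double_halfS natrM.
Qed.

Lemma natr_schroederS_binomial_transform n :
  (schroeder n.+1)%:R = 2 * binomial_transform 3 (aerated_catalan 2) n :> R.
Proof.
rewrite natr_schroederS_delannoy -coef_scaleX_add_exp_catalan.
set p := delannoy_poly ^+ n.
have -> : delannoy_poly ^+ n.+1 = p * 'X * 'X + 3 *: (p * 'X) + 2 *: p.
  by rewrite exprSr -/p -!mul_polyC; ring.
have -> : ('X + 1) ^+ 2 * p = p * 'X^2 + 2 *: (p * 'X) + p.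
  by rewrite -!mul_polyC; ring.
have sym1 := coef_scaleX_add_exp_sym (2 : R) 3 n 1.
have sym2 := coef_scaleX_add_exp_sym (2 : R) 3 n 2.
rewrite -/p !expr1 addn1 in sym1; rewrite -/p addn2 in sym2.
(* With p_j := [X^j] p, the left side is 2 p_n + 2 p_(n+1) - p_(n-1) - p_(n-2),
   and the symmetry turns p_(n-k) into 2^k p_(n+k). *)
rewrite !coefD !coefZ [(p * 'X * 'X)`_n.+1]coefMX [(p * 'X)`_n.+1]coefMX /=.
by rewrite -sym1 -sym2; ring.
Qed.

Lemma motzkin_catalanS_alternating n :
  (motzkin n)%:R =
  \sum_(k < n.+1) (-1) ^+ (n - k) * 'C(n, k)%:R * (catalan k.+1)%:R :> R.
Proof.
transitivity
  (binomial_transform (-1) (binomial_transform 2 (aerated_catalan (1 : R))) n).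
  rewrite binomial_transform_comp natr_motzkin_binomial_transform.
  by congr (binomial_transform _ _ n); ring.
by apply: eq_bigr => k _; rewrite natr_catalanS_binomial_transform; ring.
Qed.

Lemma motzkin_catalanS_alternating3 n :
  (motzkin n)%:R =
  \sum_(k < n.+1) (-1) ^+ k * 3 ^+ (n - k) * 'C(n, k)%:R * (catalan k.+1)%:R :> R.
Proof.
transitivity
  (binomial_transform 3 (binomial_transform (-2) (aerated_catalan (1 : R))) n).
  rewrite binomial_transform_comp natr_motzkin_binomial_transform.
  by congr (binomial_transform _ _ n); ring.
apply: eq_bigr => k _.
rewrite natr_catalanS_binomial_transform.
by rewrite (binomial_transformN _ _ (@aerated_catalan_odd 1)); ring.
Qed.

End AeratedCatalan.

Section SchroederIdentities.
Variables (F : fieldType) (s : F).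
Hypotheses (s_sqr : s ^+ 2 = 2) (s_neq0 : s != 0).

Lemma natr_schroederS_sqrt2 k :
  (schroeder k.+1)%:R =
  2 * (s ^+ k * binomial_transform (3 / s) (aerated_catalan 1) k).
Proof.
rewrite natr_schroederS_binomial_transform
  (@eq_binomial_transform _ 3 _ (fun i => s ^+ i * aerated_catalan 1 i)); last first.
  by move=> i _; rewrite -s_sqr aerated_catalan_sqr.
by rewrite -binomial_transform_scale [s * _]mulrC divfK.
Qed.

Let two_neq0 : (2 : F) != 0. Proof. by rewrite -s_sqr expf_neq0. Qed.

Let sqrt2_expS2_cancel n x : (s ^+ n.+2)^-1 * (2 * (s ^+ n * x)) = x.
Proof. by rewrite -addn2 exprD s_sqr; field; rewrite expf_neq0 ?two_neq0. Qed.

Lemma motzkin_schroederS_sub3 n :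
  (motzkin n)%:R =
  (s ^+ n.+2)^-1 *
  \sum_(k < n.+1) (s - 3) ^+ (n - k) * 'C(n, k)%:R * (schroeder k.+1)%:R.
Proof.
have -> : (motzkin n)%:R =
    binomial_transform (3 / s + (s - 3) / s) (aerated_catalan 1) n.
  by rewrite natr_motzkin_binomial_transform; congr (binomial_transform _ _ n); field.
rewrite -[LHS](sqrt2_expS2_cancel n) -binomial_transform_comp_scale //; congr (_ * _).
under [RHS]eq_bigr => k _ do rewrite natr_schroederS_sqrt2.
by rewrite /binomial_transform mulr_sumr; apply: eq_bigr => k _; ring.
Qed.

Lemma motzkin_schroederS_add3 n :
  (motzkin n)%:R =
  (s ^+ n.+2)^-1 *
  \sum_(k < n.+1)
    (-1) ^+ k * (3 + s) ^+ (n - k) * 'C(n, k)%:R * (schroeder k.+1)%:R.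
Proof.
have -> : (motzkin n)%:R =
    binomial_transform (- (3 / s) + (3 + s) / s) (aerated_catalan 1) n.
  by rewrite natr_motzkin_binomial_transform; congr (binomial_transform _ _ n); field.
rewrite -[LHS](sqrt2_expS2_cancel n) -binomial_transform_comp_scale //; congr (_ * _).
under eq_binomial_transform => k _ do
  rewrite (binomial_transformN _ _ (@aerated_catalan_odd _ 1)).
under [RHS]eq_bigr => k _ do rewrite natr_schroederS_sqrt2.
by rewrite /binomial_transform mulr_sumr; apply: eq_bigr => k _; ring.
Qed.

End SchroederIdentities.

Theorem proposition3p3 (R : rcfType) (n : nat) :
  let s2 : R := Num.sqrt (2 : R) in
  [/\ (motzkin n)%:R
        = \sum_(k < n.+1)
            (-1 : R) ^+ (n - k)%N * ('C(n, k))%:R * (catalan k.+1)%:R,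
      (motzkin n)%:R
        = \sum_(k < n.+1)
            (-1 : R) ^+ k * (3 : R) ^+ (n - k)%N * ('C(n, k))%:R
              * (catalan k.+1)%:R,
      (motzkin n)%:R
        = (s2 ^+ n.+2)^-1 *
          \sum_(k < n.+1)
            (s2 - 3) ^+ (n - k)%N * ('C(n, k))%:R * (schroeder k.+1)%:R
    & (motzkin n)%:R
        = (s2 ^+ n.+2)^-1 *
          \sum_(k < n.+1)
            (-1 : R) ^+ k * (3 + s2) ^+ (n - k)%N * ('C(n, k))%:R
              * (schroeder k.+1)%:R].
Proof.
move=> s; have s_sqr : s ^+ 2 = 2 by rewrite sqr_sqrtr // ler0n.
have s_neq0 : s != 0 by rewrite sqrtr_eq0 -ltNge ltr0n.
split.
- exact: motzkin_catalanS_alternating.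
- exact: motzkin_catalanS_alternating3.
- exact: motzkin_schroederS_sub3.
- exact: motzkin_schroederS_add3.
Qed.
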